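(* Let $M$ be a compact Polish metric space, let $\bar a=(a_0,\dots,a_{p-1})$ and $\bar b=(b_0,\dots,b_{p-1})$ be tuples from $M$, and let $(A_n:n\in\omega)$ be a sequence of finite subsets of $M$ with $A_n\subseteq A_{n+1}$ and $\bigcup_{z\in A_n}B_{2^{-n}}(z)=M$ for all $n$. If $\mathrm{SR}(\bar a,\bar b)>\omega$, then there is a compact approximation system for $M,\bar a,\bar b$ with respect to $(A_n:n\in\omega)$.
   Context: $B_r(z)$ denotes the open ball of radius $r$ about $z$. $M$ is viewed as a structure in the language $\mathscr{U}=\{\dot d_q,\dot d^q:q\in\mathbb{Q}^+\}$ with $\dot d_q(x,y)\Leftrightarrow d(x,y)<q$ and $\dot d^q(x,y)\Leftrightarrow d(x,y)>q$. Back-and-forth relations on equal-length tuples: $\bar a\sim_0\bar b$ iff $a_i\mapsto b_i$ is a partial $\mathscr{U}$-isomorphism (i.e. a partial isometry); $\bar a\sim_{\alpha+1}\bar b$ iff for every $a\in M$ there is $b\in M$ with $\bar a a\sim_\alpha\bar b b$ and for every $b\in M$ there is $a\in M$ with $\bar a a\sim_\alpha\bar b b$; at limits $\beta$, $\sim_\beta$ is the intersection of $\sim_\alpha$, $\alpha<\beta$. $\mathrm{SR}(\bar a,\bar b)$ is the least $\mu$ with $\neg(\bar a\sim_\mu\bar b)$ (or $\infty$). A compact approximation system for $M,\bar a,\bar b$ with respect to $(A_n)$ is a sequence $(\varphi_n:n\in\omega)$ such that for every $n$: (i) $\varphi_n:A_n\to A_n$; (ii) for all $i<p$ and $z\in A_n$,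 $|d(a_i,z)-d(b_i,\varphi_n(z))|<2^{-n}$; (iii) for all $m\le n$, $y\in A_m$, $z\in A_n$, $|d(y,z)-d(\varphi_m(y),\varphi_n(z))|<2^{-m}+2^{-n}$; (iv) $\bigcup_{z\in A_n}B_{2^{-(n-1)}}(\varphi_n(z))=M$. *)

From Stdlib Require Import Reals QArith List.
Open Scope R_scope.

Record is_metric (M : Type) (d : M -> M -> R) : Prop := {
  met_nonneg : forall x y, 0 <= d x y;
  met_zero   : forall x y, d x y = 0 <-> x = y;
  met_sym    : forall x y, d x y = d y x;
  met_tri    : forall x y z, d x z <= d x y + d y z }.

Definition ball {M : Type} (d : M -> M -> R) (z : M) (r : R) : M -> Prop :=
  fun x => d z x < r.

Definition is_open {M : Type} (d : M -> M -> R) (U : M -> Prop) : Prop :=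
  forall x, U x -> exists r, 0 < r /\ forall y, ball d x r y -> U y.

Definition is_compact {M : Type} (d : M -> M -> R) : Prop :=
  forall (I : Type) (U : I -> M -> Prop),
    (forall i, is_open d (U i)) -> (forall x, exists i, U i x) ->
    exists l : list I, forall x, exists i, In i l /\ U i x.

Definition cauchy_seq {M : Type} (d : M -> M -> R) (u : nat -> M) : Prop :=
  forall eps, 0 < eps -> exists N, forall m n, (N <= m)%nat -> (N <= n)%nat ->
    d (u m) (u n) < eps.

Definition converges_to {M : Type} (d : M -> M -> R) (u : nat -> M) (x : M) : Prop :=
  forall eps, 0 < eps -> exists N, forall n, (N <= n)%nat -> d (u n) x < eps.

Definition is_complete {M : Type} (d : M -> M -> R) : Prop :=
  forall u, cauchy_seq d u -> exists x, converges_to d u x.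

(* Separable: there is a countable dense subset (enumerated, possibly empty). *)
Definition is_separable {M : Type} (d : M -> M -> R) : Prop :=
  exists e : nat -> option M, forall x eps, 0 < eps ->
    exists n y, e n = Some y /\ d x y < eps.

Definition is_polish {M : Type} (d : M -> M -> R) : Prop :=
  is_metric M d /\ is_complete d /\ is_separable d.

(* ~_0 : the map a_i |-> b_i is a partial isomorphism for the language
   {=} U {d_q, d^q : q in Q+}, with d_q(x,y) <-> d(x,y) < q and
   d^q(x,y) <-> d(x,y) > q. Tuples are lists. *)
Definition sim0 {M : Type} (d : M -> M -> R) (a b : list M) : Prop :=
  length a = length b /\
  forall i j, (i < length a)%nat -> (j < length a)%nat ->
    forall x0 : M,
    (nth i a x0 = nth j a x0 <-> nth i b x0 = nth j b x0) /\
    forall q : Q, (0 < q)%Q ->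
      (d (nth i a x0) (nth j a x0) < Q2R q <-> d (nth i b x0) (nth j b x0) < Q2R q) /\
      (d (nth i a x0) (nth j a x0) > Q2R q <-> d (nth i b x0) (nth j b x0) > Q2R q).

Fixpoint sim {M : Type} (d : M -> M -> R) (n : nat) (a b : list M) : Prop :=
  match n with
  | O => sim0 d a b
  | S k => (forall x, exists y, sim d k (a ++ x :: nil) (b ++ y :: nil)) /\
           (forall y, exists x, sim d k (a ++ x :: nil) (b ++ y :: nil))
  end.

(* SR(a,b) > omega  <->  a ~_mu b for all mu <= omega  <-> a ~_n b for all n. *)
Definition SR_gt_omega {M : Type} (d : M -> M -> R) (a b : list M) : Prop :=
  forall n, sim d n a b.

(* Compact approximation system for M, a, b w.r.t. (A_n). phi n is a map on M
   whose restriction to A_n is the map phi_n : A_n -> A_n. *)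
Definition compact_approx_system {M : Type} (d : M -> M -> R) (a b : list M)
  (A : nat -> list M) (phi : nat -> M -> M) : Prop :=
  forall n : nat,
    (forall z, In z (A n) -> In (phi n z) (A n)) /\
    (forall i, (i < length a)%nat -> forall x0 : M, forall z, In z (A n) ->
       Rabs (d (nth i a x0) z - d (nth i b x0) (phi n z)) < / 2 ^ n) /\
    (forall m, (m <= n)%nat -> forall y z, In y (A m) -> In z (A n) ->
       Rabs (d y z - d (phi m y) (phi n z)) < / 2 ^ m + / 2 ^ n) /\
    (forall x : M, exists z, In z (A n) /\ ball d (phi n z) (2 * / 2 ^ n) x).

From Stdlib Require Import Reals QArith ZArith List Lra Lia Qreals Classical ClassicalEpsilon.
Open Scope R_scope.

(* Fix N.  As SR(a, b) > omega, a ~_k b with k = |A_J| + |A_N|; going back along A_J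
   and forth along A_N produces a map f, sending a_i to b_i, which is isometric on a
   finite set containing a and A_N and whose image contains A_J.  Letting phi_n(z) be
   a point of A_n within 2^-n of f(z), conditions (i)-(iii) hold for n <= N by the
   triangle inequality, and so does (iv) provided 2^-J is below the slack that
   compactness gives in the covers of M by the 2^-n-balls around A_n.  Since phi_n
   only matters on the finite set A_n, these finite systems form a finitely branching
   tree, and Koenig's lemma yields an infinite branch. *)

Lemma Q2R_between (r1 r2 : R) : 0 <= r1 -> r1 < r2 ->
  exists q : Q, (0 < q)%Q /\ r1 < Q2R q < r2.
Proof.
  intros Hr1 Hr12.
  destruct (archimed_cor1 (r2 - r1)) as [n [Hn Hn0]]; [lra|].
  assert (Hnpos : 0 < INR n) by (apply lt_0_INR; lia).
  destruct (archimed (r1 * INR n)) as [Hup1 Hup2].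
  set (z := up (r1 * INR n)) in *.
  set (q := Qmake z (Pos.of_nat n)).
  assert (Hq : Q2R q = IZR z / INR n).
  { unfold q, Q2R; cbn [Qnum Qden].
    rewrite <- (Nat2Pos.id n) at 2 by lia.
    rewrite INR_IZR_INZ, positive_nat_Z; reflexivity. }
  assert (Hlow : r1 < Q2R q).
  { rewrite Hq. apply (Rmult_lt_reg_r (INR n)); [exact Hnpos|].
    unfold Rdiv. rewrite Rmult_assoc, Rinv_l; lra. }
  assert (Hhigh : Q2R q <= r1 + / INR n).
  { rewrite Hq. apply (Rmult_le_reg_r (INR n)); [exact Hnpos|].
    unfold Rdiv. rewrite Rmult_assoc, Rmult_plus_distr_r, !Rinv_l; lra. }
  exists q. split; [|lra].
  apply Rlt_Qlt. unfold Q2R at 1; simpl. lra.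
Qed.

Lemma pow2_inv_lt (eps : R) : 0 < eps -> exists k, / 2 ^ k < eps.
Proof.
  intro Heps.
  destruct (pow_lt_1_zero (/ 2) ltac:(rewrite Rabs_right; lra) eps Heps) as [k Hk].
  exists k. specialize (Hk k (le_n k)).
  rewrite pow_inv, Rabs_right in Hk; [exact Hk|].
  apply Rle_ge, Rlt_le, Rinv_0_lt_compat, pow_lt. lra.
Qed.

Lemma pow2_inv_le (j k : nat) : (j <= k)%nat -> / 2 ^ k <= / 2 ^ j.
Proof.
  intro Hjk. apply Rinv_le_contravar; [apply pow_lt; lra|].
  apply Rle_pow; [lra | exact Hjk].
Qed.

Lemma list_uniform_bound {X : Type} (P : X -> nat -> Prop) (l : list X) :
  (forall x N N', (N <= N')%nat -> P x N -> P x N') ->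
  (forall x, In x l -> exists N, P x N) ->
  exists N, forall x, In x l -> P x N.
Proof.
  intro Hmono. induction l as [|x l IH]; intro Hl.
  - exists O. intros x [].
  - destruct (Hl x (or_introl eq_refl)) as [N1 H1].
    destruct IH as [N2 H2]; [intros y Hy; apply Hl; right; exact Hy|].
    exists (Nat.max N1 N2). intros y [->|Hy].
    + apply (Hmono y N1); [lia | exact H1].
    + apply (Hmono y N2); [lia | exact (H2 y Hy)].
Qed.

Section Konig.

Variable T : Type.
Variable E : nat -> T -> T -> Prop.
Variable P : nat -> (nat -> T) -> Prop.
Variable F : nat -> list T.

Hypothesis P_local : forall n s t,
  (forall k, (k <= n)%nat -> E k (s k) (t k)) -> P n s -> P n t.
Hypothesis P_finite : forall n s, P n s -> exists c, In c (F n) /\ E n (s n) c.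
Hypothesis P_approx : forall N, exists s, forall n, (n <= N)%nat -> P n s.

Definition extendable (n : nat) (t : nat -> T) : Prop :=
  forall N, exists s,
    (forall k, (k < n)%nat -> E k (s k) (t k)) /\ forall k, (k <= N)%nat -> P k s.

Definition upd (t : nat -> T) (n : nat) (c : T) : nat -> T :=
  fun k => if Nat.eq_dec k n then c else t k.

Lemma extendable_step n t : extendable n t -> exists c, extendable (S n) (upd t n c).
Proof.
  (* Otherwise each of the finitely many candidates in [F n] fails at some depth,
     hence all fail at a common depth, whereas [t] itself extends to that depth. *)
  intro Ht. apply NNPP. intro Hno.
  assert (Hbound : exists N, forall c, In c (F n) -> ~ exists s,
      (forall k, (k < S n)%nat -> E k (s k) (upd t n c k)) /\
      forall k, (k <= N)%nat -> P k s).
  { apply list_uniform_bound.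
    - intros c N N' HNN' Hc [s [Hs HP]]. apply Hc. exists s.
      split; [exact Hs | intros k Hk; apply HP; lia].
    - intros c _. apply NNPP. intro Hc. apply Hno. exists c. intro N.
      apply NNPP. intro HN. apply Hc. exists N. exact HN. }
  destruct Hbound as [N HN].
  destruct (Ht (Nat.max N n)) as [s [Hagree HP]].
  destruct (P_finite n s (HP n ltac:(lia))) as [c [Hc Hsc]].
  apply (HN c Hc). exists s. split.
  - intros k Hk. unfold upd.
    destruct (Nat.eq_dec k n) as [->|Hkn]; [exact Hsc | apply Hagree; lia].
  - intros k Hk. apply HP. lia.
Qed.

Fixpoint branch (t0 : nat -> T) (n : nat) : nat -> T :=
  match n with
  | O => t0
  | S n =>
      let t := branch t0 n in
      upd t n (epsilon (inhabits (t n)) (fun c => extendable (S n) (upd t n c)))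
  end.

Lemma branch_extendable t0 n : extendable n (branch t0 n).
Proof.
  induction n as [|n IH].
  - intro N. destruct (P_approx N) as [s Hs].
    exists s. split; [intros k Hk; lia | exact Hs].
  - exact (epsilon_spec _ _ (extendable_step n _ IH)).
Qed.

Lemma branch_stable t0 n m k :
  (k < n)%nat -> (n <= m)%nat -> branch t0 m k = branch t0 n k.
Proof.
  intros Hk Hnm. induction Hnm as [|m Hnm IH]; [reflexivity|].
  cbn [branch]. unfold upd at 1.
  destruct (Nat.eq_dec k m); [lia | exact IH].
Qed.

Theorem konig : exists s, forall n, P n s.
Proof.
  destruct (P_approx O) as [t0 _].
  exists (fun k => branch t0 (S k) k). intro n.
  destruct (branch_extendable t0 (S n) n) as [s [Hagree HP]].
  apply (P_local n s); [|apply HP; lia].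
  intros k Hk. rewrite <- (branch_stable t0 (S k) (S n) k) by lia.
  apply Hagree. lia.
Qed.

End Konig.

Section BackAndForth.

Variables (M : Type) (d : M -> M -> R).

Lemma sim_app_forth (D : list M) k a b : sim d (length D + k) a b ->
  exists y, length y = length D /\ sim d k (a ++ D) (b ++ y).
Proof.
  revert a b. induction D as [|x D IH]; intros a b Hsim.
  - exists nil. rewrite !app_nil_r. split; [reflexivity | exact Hsim].
  - destruct Hsim as [Hforth _]. destruct (Hforth x) as [y0 Hy0].
    destruct (IH _ _ Hy0) as [y [Hlen Hsim]].
    exists (y0 :: y). rewrite <- !app_assoc in Hsim. split; [cbn; lia | exact Hsim].
Qed.

Lemma sim_app_back (W : list M) k a b : sim d (length W + k) a b ->
  exists u, length u = length W /\ sim d k (a ++ u) (b ++ W).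
Proof.
  revert a b. induction W as [|w W IH]; intros a b Hsim.
  - exists nil. rewrite !app_nil_r. split; [reflexivity | exact Hsim].
  - destruct Hsim as [_ Hback]. destruct (Hback w) as [u0 Hu0].
    destruct (IH _ _ Hu0) as [u [Hlen Hsim]].
    exists (u0 :: u). rewrite <- !app_assoc in Hsim. split; [cbn; lia | exact Hsim].
Qed.

Hypothesis Hm : is_metric M d.

Lemma dist_dist_le x y x' y' : Rabs (d x y - d x' y') <= d x x' + d y y'.
Proof.
  pose proof (met_tri _ _ Hm x x' y). pose proof (met_tri _ _ Hm x' y' y).
  pose proof (met_tri _ _ Hm x' x y'). pose proof (met_tri _ _ Hm x y y').
  pose proof (met_sym _ _ Hm x x'). pose proof (met_sym _ _ Hm y y').
  apply Rabs_le. lra.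
Qed.

Lemma sim0_dist a b : sim0 d a b -> forall i j x0,
  (i < length a)%nat -> (j < length a)%nat ->
  d (nth i a x0) (nth j a x0) = d (nth i b x0) (nth j b x0).
Proof.
  intros [_ Hsim] i j x0 Hi Hj.
  destruct (Hsim i j Hi Hj x0) as [_ Hq].
  set (da := d (nth i a x0) (nth j a x0)) in *.
  set (db := d (nth i b x0) (nth j b x0)) in *.
  assert (Hda : 0 <= da) by apply (met_nonneg _ _ Hm).
  assert (Hdb : 0 <= db) by apply (met_nonneg _ _ Hm).
  destruct (Rtotal_order da db) as [Hlt|[Heq|Hgt]]; [|exact Heq|].
  - destruct (Q2R_between da db Hda Hlt) as [q [Hq0 Hbetween]].
    destruct (Hq q Hq0) as [[Hless _] _]. specialize (Hless (proj1 Hbetween)). lra.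
  - destruct (Q2R_between db da Hdb Hgt) as [q [Hq0 Hbetween]].
    destruct (Hq q Hq0) as [[_ Hless] _]. specialize (Hless (proj1 Hbetween)). lra.
Qed.

(* Entries repeated on the left have distance 0, hence equal images on the right. *)
Lemma sim0_index_map a b : sim0 d a b ->
  exists f, forall i x0, (i < length a)%nat -> f (nth i a x0) = nth i b x0.
Proof.
  intro Hsim. pose proof (proj1 Hsim) as Hlen.
  exists (fun x => epsilon (inhabits x) (fun y => exists j,
    (j < length a)%nat /\ nth j a x = x /\ nth j b x = y)).
  intros i x0 Hi. set (x := nth i a x0).
  destruct (epsilon_spec (inhabits x) (fun y => exists j,
      (j < length a)%nat /\ nth j a x = x /\ nth j b x = y))
    as [j [Hj [Hja Hjb]]].
  { exists (nth i b x), i. split; [exact Hi|]. split; [apply nth_indep; exact Hi | reflexivity]. }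
  rewrite <- Hjb, (nth_indep b x0 x) by lia.
  apply (met_zero _ _ Hm).
  rewrite <- (sim0_dist a b Hsim j i x Hj Hi), Hja, (nth_indep a x x0) by exact Hi.
  apply (met_zero _ _ Hm). reflexivity.
Qed.

Lemma sim_partial_isometry a b (D W : list M) : sim d (length W + length D) a b ->
  exists (S : list M) (f : M -> M),
    incl a S /\ incl D S /\
    (forall x y, In x S -> In y S -> d (f x) (f y) = d x y) /\
    (forall i x0, (i < length a)%nat -> f (nth i a x0) = nth i b x0) /\
    (forall w, In w W -> exists v, In v S /\ f v = w).
Proof.
  (* Back along [W], then forth along [D], gives [a ++ u ++ D ~_0 b ++ W ++ y];
     [f] sends each entry on the left to the entry in the same position on the right. *)
  intro Hsim.
  destruct (sim_app_back W (length D) a b Hsim) as [u [Hu Hsim_u]].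
  rewrite <- (Nat.add_0_r (length D)) in Hsim_u.
  destruct (sim_app_forth D 0 _ _ Hsim_u) as [y [Hy Hsim0]].
  rewrite <- !app_assoc in Hsim0. cbn [sim] in Hsim0.
  set (S := a ++ u ++ D). set (S' := b ++ W ++ y).
  assert (Hab : length a = length b).
  { pose proof (proj1 Hsim0) as Hlen. unfold S, S' in Hlen.
    rewrite !length_app in Hlen. lia. }
  destruct (sim0_index_map S S' Hsim0) as [f Hf].
  exists S, f. split; [|split; [|split; [|split]]].
  - intros x Hx. apply in_or_app. left. exact Hx.
  - intros x Hx. apply in_or_app. right. apply in_or_app. right. exact Hx.
  - intros x x' Hx Hx'.
    destruct (In_nth S x x Hx) as [i [Hi <-]].
    destruct (In_nth S x' x Hx') as [j [Hj <-]].
    rewrite !Hf by exact Hi || exact Hj.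
    symmetry. apply (sim0_dist S S' Hsim0); assumption.
  - intros i x0 Hi.
    assert (HiS : (i < length S)%nat) by (unfold S; rewrite length_app; lia).
    specialize (Hf i x0 HiS). unfold S, S' in Hf.
    rewrite !app_nth1 in Hf by lia. exact Hf.
  - intros w Hw. destruct (In_nth W w w Hw) as [k [Hk <-]].
    assert (HkS : (length a + k < length S)%nat)
      by (unfold S; rewrite !length_app; lia).
    exists (nth (length a + k) S w). split; [apply nth_In; exact HkS|].
    rewrite (Hf _ _ HkS). unfold S'. rewrite Hab, app_nth2_plus, app_nth1 by lia.
    reflexivity.
Qed.

End BackAndForth.

Section CompactSlack.

Variables (M : Type) (d : M -> M -> R).
Hypothesis Hm : is_metric M d.
Hypothesis Hc : is_compact d.

Lemma cover_slack (l : list M) (r : R) :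
  (forall x, exists z, In z l /\ d z x < r) ->
  exists J, forall x, exists z, In z l /\ d z x + / 2 ^ J < r.
Proof.
  intro Hl.
  set (U := fun (k : nat) (x : M) => exists z, In z l /\ d z x + / 2 ^ k < r).
  destruct (Hc nat U) as [ks Hks].
  - intros k x [z [Hz Hzx]]. exists (r - / 2 ^ k - d z x). split; [lra|].
    intros y Hy. exists z. split; [exact Hz|].
    unfold ball in Hy. pose proof (met_tri _ _ Hm z x y). lra.
  - intro x. destruct (Hl x) as [z [Hz Hzx]].
    destruct (pow2_inv_lt (r - d z x)) as [k Hk]; [lra|].
    exists k, z. split; [exact Hz | lra].
  - exists (list_max ks). intro x.
    destruct (Hks x) as [k [Hk [z [Hz Hzx]]]]. exists z. split; [exact Hz|].
    assert (Hkmax : (k <= list_max ks)%nat).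
    { refine (proj1 (Forall_forall (fun j => (j <= list_max ks)%nat) ks) _ k Hk).
      apply list_max_le. reflexivity. }
    pose proof (pow2_inv_le _ _ Hkmax). lra.
Qed.

Lemma covers_slack (A : nat -> list M) (r : nat -> R) (N : nat) :
  (forall n x, exists z, In z (A n) /\ d z x < r n) ->
  exists J, forall n, (n <= N)%nat ->
    forall x, exists z, In z (A n) /\ d z x + / 2 ^ J < r n.
Proof.
  intro Hcover.
  destruct (list_uniform_bound (fun n J => forall x, exists z,
      In z (A n) /\ d z x + / 2 ^ J < r n) (seq 0 (S N))) as [J HJ].
  - intros n J J' HJJ' HJ x. destruct (HJ x) as [z [Hz Hzx]].
    exists z. split; [exact Hz|]. pose proof (pow2_inv_le _ _ HJJ'). lra.
  - intros n _. exact (cover_slack (A n) (r n) (Hcover n)).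
  - exists J. intros n Hn. apply HJ, in_seq. lia.
Qed.

End CompactSlack.

Fixpoint tuples {X : Type} (l : list X) (k : nat) : list (list X) :=
  match k with
  | O => nil :: nil
  | S k => flat_map (fun x => map (cons x) (tuples l k)) l
  end.

Lemma tuples_spec {X : Type} (l v : list X) : incl v l -> In v (tuples l (length v)).
Proof.
  induction v as [|x v IH]; intro Hv; [left; reflexivity|].
  apply in_flat_map. exists x. split; [apply Hv; left; reflexivity|].
  apply in_map, IH. intros y Hy. apply Hv. right. exact Hy.
Qed.

Fixpoint zip_lookup {X : Type} (l v : list X) (z : X) : X :=
  match l, v with
  | x :: l, y :: v => if excluded_middle_informative (z = x) then y else zip_lookup l v z
  | _, _ => z
  end.

Lemma zip_lookup_map {X : Type} (f : X -> X) (l : list X) (z : X) :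
  In z l -> zip_lookup l (map f l) z = f z.
Proof.
  induction l as [|x l IH]; intro Hz; [destruct Hz|]. cbn.
  destruct (excluded_middle_informative (z = x)) as [->|Hzx]; [reflexivity|].
  apply IH. destruct Hz as [->|Hz]; [contradiction | exact Hz].
Qed.

Section Approximation.

Variables (M : Type) (d : M -> M -> R) (a b : list M) (A : nat -> list M).
Hypothesis Hm : is_metric M d.
Hypothesis Hcover : forall n x, exists z, In z (A n) /\ ball d z (/ 2 ^ n) x.

Definition approx_level (n : nat) (phi : nat -> M -> M) : Prop :=
    (forall z, In z (A n) -> In (phi n z) (A n)) /\
    (forall i, (i < length a)%nat -> forall x0 : M, forall z, In z (A n) ->
       Rabs (d (nth i a x0) z - d (nth i b x0) (phi n z)) < / 2 ^ n) /\
    (forall m, (m <= n)%nat -> forall y z, In y (A m) -> In z (A n) ->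
       Rabs (d y z - d (phi m y) (phi n z)) < / 2 ^ m + / 2 ^ n) /\
    (forall x : M, exists z, In z (A n) /\ ball d (phi n z) (2 * / 2 ^ n) x).

Lemma approx_level_ext n phi psi :
  (forall m z, (m <= n)%nat -> In z (A m) -> phi m z = psi m z) ->
  approx_level n phi -> approx_level n psi.
Proof.
  intros Heq [Hrange [Hpar [Hdist Hcov]]]. split; [|split; [|split]].
  - intros z Hz. rewrite <- Heq by auto. exact (Hrange z Hz).
  - intros i Hi x0 z Hz. rewrite <- Heq by auto. exact (Hpar i Hi x0 z Hz).
  - intros m Hmn y z Hy Hz. rewrite <- !Heq by auto. exact (Hdist m Hmn y z Hy Hz).
  - intro x. destruct (Hcov x) as [z [Hz Hzx]]. exists z. rewrite <- Heq by auto.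
    split; assumption.
Qed.

Definition net_point (n : nat) (x : M) : M :=
  epsilon (inhabits x) (fun z => In z (A n) /\ ball d z (/ 2 ^ n) x).

Lemma net_point_spec n x : In (net_point n x) (A n) /\ d (net_point n x) x < / 2 ^ n.
Proof. exact (epsilon_spec _ _ (Hcover n x)). Qed.

Lemma approx_levels_of_isometry (S : list M) (f : M -> M) (N J : nat) :
  (forall n, (n <= N)%nat -> incl (A n) S) -> incl a S ->
  (forall x y, In x S -> In y S -> d (f x) (f y) = d x y) ->
  (forall i x0, (i < length a)%nat -> f (nth i a x0) = nth i b x0) ->
  (forall w, In w (A J) -> exists v, In v S /\ f v = w) ->
  (forall n, (n <= N)%nat -> forall x, exists z, In z (A n) /\ d z x + / 2 ^ J < / 2 ^ n) ->
  forall n, (n <= N)%nat -> approx_level n (fun m z => net_point m (f z)).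
Proof.
  intros HAS HaS Hiso Hab HJ Hslack n Hn.
  pose proof (met_sym _ _ Hm) as Hsym.
  split; [|split; [|split]].
  - intros z _. apply net_point_spec.
  - intros i Hi x0 z Hz.
    assert (Hai : In (nth i a x0) S) by (apply HaS, nth_In, Hi).
    rewrite <- (Hiso _ z Hai (HAS n Hn z Hz)), (Hab i x0 Hi).
    pose proof (dist_dist_le M d Hm (nth i b x0) (f z) (nth i b x0) (net_point n (f z)))
      as Hle.
    rewrite (proj2 (met_zero _ _ Hm _ _) eq_refl), (Hsym (f z)) in Hle.
    destruct (net_point_spec n (f z)) as [_ Hnz]. lra.
  - intros m Hmn y z Hy Hz.
    rewrite <- (Hiso y z (HAS m ltac:(lia) y Hy) (HAS n Hn z Hz)).
    pose proof (dist_dist_le M d Hm (f y) (f z) (net_point m (f y)) (net_point n (f z)))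
      as Hle.
    rewrite (Hsym (f y) (net_point m (f y))), (Hsym (f z) (net_point n (f z))) in Hle.
    destruct (net_point_spec m (f y)) as [_ Hny].
    destruct (net_point_spec n (f z)) as [_ Hnz]. lra.
  - (* [x] is within [/2^J] of some [f v] in [A J], and [v] is within
       [/2^n - /2^J] of some [z] in [A n]. *)
    intro x. destruct (Hcover J x) as [w [Hw Hwx]]. unfold ball in Hwx.
    destruct (HJ w Hw) as [v [Hv <-]].
    destruct (Hslack n Hn v) as [z [Hz Hzv]].
    exists z. split; [exact Hz|]. unfold ball.
    assert (Hfz : d (f z) (f v) = d z v) by exact (Hiso z v (HAS n Hn z Hz) Hv).
    pose proof (met_tri _ _ Hm (net_point n (f z)) (f z) x).
    pose proof (met_tri _ _ Hm (f z) (f v) x).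
    destruct (net_point_spec n (f z)) as [_ Hnz]. lra.
Qed.

Hypothesis Hc : is_compact d.
Hypothesis Hmono : forall n, incl (A n) (A (S n)).

Lemma incl_chain n N : (n <= N)%nat -> incl (A n) (A N).
Proof.
  induction 1 as [|N _ IH]; [apply incl_refl | exact (incl_tran IH (Hmono N))].
Qed.

Lemma approx_levels_finite : SR_gt_omega d a b ->
  forall N, exists phi, forall n, (n <= N)%nat -> approx_level n phi.
Proof.
  intros HSR N.
  destruct (covers_slack M d Hm Hc A (fun n => / 2 ^ n) N Hcover) as [J HJ].
  destruct (sim_partial_isometry M d Hm a b (A N) (A J) (HSR _))
    as [S [f [HaS [HNS [Hiso [Hab HJS]]]]]].
  assert (HAS : forall n, (n <= N)%nat -> incl (A n) S)
    by (intros n Hn; exact (incl_tran (incl_chain n N Hn) HNS)).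
  exists (fun m z => net_point m (f z)).
  exact (approx_levels_of_isometry S f N J HAS HaS Hiso Hab HJS HJ).
Qed.

End Approximation.

Theorem lemma3p3 (M : Type) (d : M -> M -> R)
  (Hpolish : is_polish d) (Hcompact : is_compact d)
  (p : nat) (a b : list M) (Ha : length a = p) (Hb : length b = p)
  (A : nat -> list M)
  (Hmono : forall n, incl (A n) (A (S n)))
  (Hcover : forall n (x : M), exists z, In z (A n) /\ ball d z (/ 2 ^ n) x)
  (HSR : SR_gt_omega d a b) :
  exists phi : nat -> M -> M, compact_approx_system d a b A phi.
Proof.
  destruct Hpolish as [Hm _].
  destruct (konig (M -> M) (fun n f g => forall z, In z (A n) -> f z = g z)
    (approx_level M d a b A) (fun n => map (zip_lookup (A n)) (tuples (A n) (length (A n)))))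
    as [phi Hphi].
  - intros n s t Hst. apply approx_level_ext. intros m z Hmn Hz. apply Hst; assumption.
  - intros n s Hs. exists (zip_lookup (A n) (map (s n) (A n))). split.
    + apply in_map. rewrite <- (length_map (s n)). apply tuples_spec.
      intros y Hy. apply in_map_iff in Hy as [z [<- Hz]]. exact (proj1 Hs z Hz).
    + intros z Hz. symmetry. exact (zip_lookup_map (s n) (A n) z Hz).
  - exact (approx_levels_finite M d a b A Hm Hcover Hcompact Hmono HSR).
  - exists phi. exact Hphi.
Qed.
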